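(* For all integers $k,n\ge 1$, $$\zeta^*(k+1,\underbrace{1,\dots,1}_{n})=\sum_{t=1}^{n+1}\ \sum_{\substack{a_1+a_2+\dots+a_t=n+1-t\\ a_i\ge 0,\ i=1,\dots,t}}\zeta(a_t+k+1,\,a_1+1,\,a_2+1,\dots,a_{t-1}+1).$$
   Context: For positive integers $k_1,\dots,k_n$ with $k_1\ge 2$, $\zeta(k_1,\dots,k_n)=\sum_{m_1>\dots>m_n\ge 1}\prod_i m_i^{-k_i}$ and $\zeta^*(k_1,\dots,k_n)=\sum_{m_1\ge\dots\ge m_n\ge 1}\prod_i m_i^{-k_i}$. $\underbrace{1,\dots,1}_{n}$ denotes $n$ entries equal to $1$. For $t=1$ the summand is $\zeta(a_1+k+1)$. *)

From HB Require Import structures.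
From mathcomp Require Import all_boot all_order all_algebra.
From mathcomp Require Import all_classical all_reals all_analysis.
Set Implicit Arguments. Unset Strict Implicit. Unset Printing Implicit Defensive.
Import Order.TTheory GRing.Theory Num.Theory numFieldNormedType.Exports.
Local Open Scope ring_scope.

(* Truncated multiple zeta sum:
   mzv_trunc N [k1;...;kn] = sum_{N >= m1 > m2 > ... > mn >= 1} prod_i mi^{-ki} *)
Fixpoint mzv_trunc (R : realType) (N : nat) (ks : seq nat) : R :=
  match ks with
  | [::] => 1
  | k :: ks' => \sum_(1 <= m < N.+1) (m%:R ^- k) * mzv_trunc R m.-1 ks'
  end.

(* Truncated multiple zeta-star sum:
   mzsv_trunc N [k1;...;kn] = sum_{N >= m1 >= m2 >= ... >= mn >= 1} prod_i mi^{-ki} *)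
Fixpoint mzsv_trunc (R : realType) (N : nat) (ks : seq nat) : R :=
  match ks with
  | [::] => 1
  | k :: ks' => \sum_(1 <= m < N.+1) (m%:R ^- k) * mzsv_trunc R m ks'
  end.

Definition mzv (R : realType) (ks : seq nat) : R := limn (fun N => mzv_trunc R N ks).

Definition mzsv (R : realType) (ks : seq nat) : R := limn (fun N => mzsv_trunc R N ks).

From HB Require Import structures.
From mathcomp Require Import all_boot all_order all_algebra.
From mathcomp Require Import all_classical all_reals all_analysis.
From mathcomp Require Import zify ring lra.
Import Order.TTheory GRing.Theory Num.Theory numFieldNormedType.Exports.
Local Open Scope ring_scope.
Set Implicit Arguments. Unset Strict Implicit. Unset Printing Implicit Defensive.

(* Splitting off the terms with m_1 = m_2 gives
     zeta*_(M+1)(1^j) = sum_(c <= j) (M+1)^(-c) zeta*_M(1^(j-c)),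
   and iterating this writes zeta*_M(1^w) as the sum of zeta_M(c_1, ..., c_r) over
   the compositions (c_1, ..., c_r) of w.  One more split of the leading index turns
   zeta*_N(k+1, 1^n) into the right-hand side truncated at N, for every N.  All
   truncations are nonnegative and nondecreasing in N, and
   zeta*_N(k+1, 1^n) <= zeta*_N(2, 1^n) <= 2^(n+1) because sum_(m >= i) m^(-2) <= 2/i,
   so every series on the right converges and the limit passes through the finite
   double sum. *)

Section TupleSums.
Variables (V : nmodType) (T : finType) (r : nat).

Lemma big_tuple_cons (P : pred (r.+1.-tuple T)) (F : r.+1.-tuple T -> V) :
  \sum_(a | P a) F a =
  \sum_(x : T) \sum_(b : r.-tuple T | P [tuple of x :: b]) F [tuple of x :: b].
Proof.
rewrite pair_big_dep /=.
rewrite (reindex (fun p : T * r.-tuple T => [tuple of p.1 :: p.2])) /=.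
  by apply: eq_bigl => -[x b].
exists (fun a => (thead a, [tuple of behead a])) => [[x b]|a] _ /=.
  by congr (_, _); apply: val_inj.
by rewrite [RHS]tuple_eta.
Qed.

Lemma big_tuple_rcons (P : pred (r.+1.-tuple T)) (F : r.+1.-tuple T -> V) :
  \sum_(a | P a) F a =
  \sum_(b : r.-tuple T) \sum_(x : T | P [tuple of rcons b x]) F [tuple of rcons b x].
Proof.
rewrite pair_big_dep /=.
rewrite (reindex (fun p : r.-tuple T * T => [tuple of rcons p.1 p.2])) /=.
  by apply: eq_bigl => -[x b].
exists (fun a => ([tuple of belast (thead a) (behead a)], last (thead a) (behead a))).
  move=> [[b Hb] x] _; rewrite /thead (tnth_nth x) /=.
  case: b Hb => [|y b] Hb /=; congr pair => //.
  - exact: val_inj.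
  - by apply: val_inj => /=; rewrite belast_rcons.
  - by rewrite last_rcons.
move=> a _; apply: val_inj => /=; rewrite -lastI.
by case: a => -[|y a].
Qed.

End TupleSums.

Lemma sumr_ord_trunc (V : nmodType) (K w : nat) (F : nat -> V) :
  (w < K)%N -> (forall i, (w < i)%N -> F i = 0) ->
  \sum_(i < K) F i = \sum_(i < w.+1) F i.
Proof.
move=> wK F0; rewrite -!(big_mkord xpredT F) (big_cat_nat (n := w.+1)) //=.
rewrite [X in _ + X]big1_seq ?addr0 // => i /andP[_].
by rewrite mem_index_iota => /andP[/F0].
Qed.

Lemma sum_nat_triangle (V : nmodType) (a b : nat) (F : nat -> nat -> V) :
  \sum_(a <= m < b) \sum_(a <= i < m.+1) F m i =
  \sum_(a <= i < b) \sum_(i <= m < b) F m i.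
Proof.
elim: b => [|b IH]; first by rewrite !big_geq.
have [ab|ba] := leqP a b; last by rewrite !big_geq.
rewrite !big_nat_recr //= IH (big_geq (leqnn b)) add0r addrA; congr (_ + _).
rewrite -big_split; apply: eq_big_nat => i /andP[_ ib].
by rewrite big_nat_recr // ltnW.
Qed.

Lemma limn_sum_nondecreasing (R : realType) (u : nat -> R) (B : R) (r : seq nat)
    (I : nat -> finType) (P : forall t, pred (I t)) (v : forall t, I t -> nat -> R) :
  (forall N, u N = \sum_(t <- r) \sum_(a : I t | P t a) v t a N) -> uniq r ->
  (forall N, u N <= B) ->
  (forall t a N M, (N <= M)%N -> v t a N <= v t a M) ->
  (forall t a N, 0 <= v t a N) ->
  limn u = \sum_(t <- r) \sum_(a : I t | P t a) limn (v t a).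
Proof.
move=> uE ur uB vnd v0.
have vB t a N : t \in r -> P t a -> v t a N <= B.
  move=> tr Pa; apply: le_trans (uB N).
  rewrite uE (bigD1_seq t) //= (bigD1 a) //= -addrA lerDl.
  by rewrite addr_ge0 ?sumr_ge0 // => *; rewrite ?sumr_ge0.
have -> : u = fun N => \sum_(t <- r) \sum_(a : I t | P t a) v t a N.
  by apply: funext => N; exact: uE.
apply: cvg_lim => //; rewrite big_seq; under eq_cvg do rewrite big_seq.
apply: (cvg_big add_continuous) => // t tr.
apply: (cvg_big add_continuous) => // a Pa.
apply: nondecreasing_is_cvgn; first by move=> N M; exact: vnd.
by exists B => _ [N _ <-]; exact: vB.
Qed.

Section Truncations.
Variable R : realType.

Lemma mzv_trunc_ge0 (M : nat) (l : seq nat) : 0 <= mzv_trunc R M l.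
Proof.
elim: l M => [|x l IH] M /=; first exact: ler01.
by apply: sumr_ge0 => m _; rewrite mulr_ge0 // invr_ge0 exprn_ge0.
Qed.

Lemma mzsv_trunc_ge0 (M : nat) (l : seq nat) : 0 <= mzsv_trunc R M l.
Proof.
elim: l M => [|x l IH] M /=; first exact: ler01.
by apply: sumr_ge0 => m _; rewrite mulr_ge0 // invr_ge0 exprn_ge0.
Qed.

Lemma le_mzv_trunc (M M' : nat) (l : seq nat) : (M <= M')%N ->
  mzv_trunc R M l <= mzv_trunc R M' l.
Proof.
case: l => [|x l] //= MM'.
rewrite [leRHS](big_cat_nat (n := M.+1)) //= lerDl.
by apply: sumr_ge0 => m _; rewrite mulr_ge0 ?mzv_trunc_ge0 // invr_ge0 exprn_ge0.
Qed.

Lemma le_mzsv_trunc_head (N s s' : nat) (l : seq nat) : (s <= s')%N ->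
  mzsv_trunc R N (s' :: l) <= mzsv_trunc R N (s :: l).
Proof.
move=> ss'; apply: ler_sum_nat => m /andP[m1 _].
rewrite ler_wpM2r ?mzsv_trunc_ge0 // lef_pV2 ?posrE ?exprn_gt0 ?ltr0n //.
by rewrite ler_weXn2l // ler1n.
Qed.

Lemma inv_sqr_le_telescope (m : nat) : (0 < m)%N ->
  m%:R ^- 2 <= 2 * (m%:R^-1 - m.+1%:R^-1) :> R.
Proof.
move=> m0; have : 1 <= m%:R :> R by rewrite ler1n.
rewrite -[m.+1%:R]natr1; set x := m%:R => x1.
have x0 : x != 0 by apply/lt0r_neq0; lra.
have x10 : x + 1 != 0 by apply/lt0r_neq0; lra.
have -> : 2 * (x^-1 - (x + 1)^-1) = x ^- 2 + (x - 1) / (x ^+ 2 * (x + 1)).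
  by field; rewrite x0 x10.
by rewrite lerDl divr_ge0 ?mulr_ge0 ?sqr_ge0 //; lra.
Qed.

Lemma sum_inv_sqr_tail (i N : nat) : (0 < i)%N ->
  \sum_(i <= m < N.+1) m%:R ^- 2 <= 2 / i%:R :> R.
Proof.
move=> i0; have [iN|Ni] := leqP i N.+1; last by rewrite big_geq ?divr_ge0 // ltnW.
apply: le_trans (_ : \sum_(i <= m < N.+1) 2 * (m%:R^-1 - m.+1%:R^-1) <= _).
  by apply: ler_sum_nat => m /andP[im _]; apply: inv_sqr_le_telescope (leq_trans i0 im).
rewrite -mulr_sumr (@telescope_sumr_eq _ i N.+1 (fun m => - m%:R^-1)) //; last first.
  by move=> m _; rewrite opprK addrC.
by rewrite ler_pM2l // opprK gerDr oppr_le0 invr_ge0.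
Qed.

Lemma mzsv_trunc_two_ones_le (j N : nat) :
  mzsv_trunc R N (2%N :: nseq j 1%N) <= 2 ^+ j.+1.
Proof.
elim: j => [|j IH].
  rewrite expr1 -[2 in leRHS]divr1 /=.
  under eq_bigr do rewrite mulr1.
  exact: sum_inv_sqr_tail.
suff step : mzsv_trunc R N (2%N :: nseq j.+1 1%N) <=
             2 * mzsv_trunc R N (2%N :: nseq j 1%N).
  by apply: le_trans step _; rewrite exprS ler_pM2l.
rewrite /=; under eq_bigr do rewrite mulr_sumr.
rewrite sum_nat_triangle mulr_sumr; apply: ler_sum_nat => i /andP[i1 _].
rewrite -mulr_suml; apply: le_trans (ler_wpM2r _ (sum_inv_sqr_tail N i1)) _.
  by rewrite mulr_ge0 ?mzsv_trunc_ge0 // invr_ge0 ler0n.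
by rewrite !mulrA -[2 / _ / _]mulrA -invfM -expr2.
Qed.

Lemma mzsv_trunc_ones_succ (j M : nat) :
  mzsv_trunc R M.+1 (nseq j 1%N) =
  \sum_(c < j.+1) M.+1%:R ^- c * mzsv_trunc R M (nseq (j - c) 1%N).
Proof.
elim: j => [|j IH]; first by rewrite big_ord1 /= expr0 invr1 mul1r.
rewrite [LHS]/= big_nat_recr //= IH [RHS]big_ord_recl /= expr0 invr1 mul1r.
congr (_ + _); rewrite mulr_sumr; apply: eq_bigr => c _.
by rewrite /bump /= add1n subSS mulrA -invfM -exprD add1n.
Qed.

(* The sum of zeta_M over the compositions of w into fewer than K parts; a part
   b_i + 1 is encoded by b_i : 'I_n.+1, which loses nothing when w <= n. *)
Definition compositions_mzv (n K M w : nat) : R :=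
  \sum_(r < K) \sum_(b : r.-tuple 'I_n.+1 | ((\sum_(x <- b) (x : nat)) + r == w)%N)
     mzv_trunc R M (map S (map val b)).

Lemma compositions_mzv_widen (n K M w : nat) : (w < K)%N ->
  compositions_mzv n K M w = compositions_mzv n w.+1 M w.
Proof.
move=> wK; apply: (sumr_ord_trunc (F := fun r =>
  \sum_(b : r.-tuple 'I_n.+1 | ((\sum_(x <- b) (x : nat)) + r == w)%N)
     mzv_trunc R M (map S (map val b)))) => // r wr.
by rewrite big_pred0 // => b; apply/negbTE/eqP; lia.
Qed.

Lemma mzsv_trunc_ones_split_diag (n m s w : nat) : (0 < m)%N ->
  (forall v, (v <= w)%N ->
     mzsv_trunc R m.-1 (nseq v 1%N) = compositions_mzv n v.+1 m.-1 v) ->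
  m%:R ^- s * mzsv_trunc R m (nseq w 1%N) =
  \sum_(c < w.+1) m%:R ^- (c + s) * compositions_mzv n w.+1 m.-1 (w - c).
Proof.
move=> m0 IH; rewrite -{2}(prednK m0) mzsv_trunc_ones_succ (prednK m0) mulr_sumr.
apply: eq_bigr => c _; rewrite IH ?leq_subr // (@compositions_mzv_widen n w.+1).
  by rewrite mulrA -invfM -exprD addnC.
by rewrite ltnS leq_subr.
Qed.

Lemma sum_head_compositions (n s w M : nat) :
  \sum_(1 <= m < M.+1) \sum_(c < w.+1)
     m%:R ^- (c + s) * compositions_mzv n w.+1 m.-1 (w - c) =
  \sum_(r < w.+1) \sum_(c < w.+1)
     \sum_(b : r.-tuple 'I_n.+1 | (c + ((\sum_(x <- b) (x : nat)) + r) == w)%N)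
       mzv_trunc R M ((c + s)%N :: map S (map val b)).
Proof.
rewrite [RHS]/= [LHS]exchange_big [RHS]exchange_big /=; apply: eq_bigr => c _.
under [RHS]eq_bigr => r _ do rewrite exchange_big.
rewrite [RHS]exchange_big; apply: eq_bigr => m _.
rewrite /compositions_mzv mulr_sumr; apply: eq_bigr => r _; rewrite mulr_sumr.
by apply: eq_bigl => b; move: (ltn_ord c) => cw; apply/eqP/eqP; lia.
Qed.

Lemma mzsv_trunc_ones_compositions (n M w : nat) : (w <= n)%N ->
  mzsv_trunc R M (nseq w 1%N) = compositions_mzv n w.+1 M w.
Proof.
elim/ltn_ind: M w => M IH [|w] wn.
  rewrite /compositions_mzv big_ord1 (big_pred1 [tuple]) // => b.
  by rewrite tuple0 big_nil.
have -> : mzsv_trunc R M (nseq w.+1 1%N) = \sum_(1 <= m < M.+1) \sum_(c < w.+1)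
    m%:R ^- (c + 1) * compositions_mzv n w.+1 m.-1 (w - c).
  apply: eq_big_nat => m /andP[m0 mM]; apply: mzsv_trunc_ones_split_diag => // v vw.
  by apply: IH; lia.
rewrite sum_head_compositions /compositions_mzv [RHS]big_ord_recl.
rewrite [X in _ = X + _]big_pred0 => [|b]; last by rewrite tuple0 big_nil.
rewrite add0r; apply: eq_bigr => r _; rewrite big_tuple_cons.
set by_head := fun c : nat =>
  \sum_(b : r.-tuple 'I_n.+1 | (c + ((\sum_(x <- b) (x : nat)) + r) == w)%N)
     mzv_trunc R M (c.+1 :: map S (map val b)).
transitivity (\sum_(c < w.+1) by_head c).
  by apply: eq_bigr => c _; apply: eq_bigr => b _; rewrite addn1.
rewrite -(@sumr_ord_trunc _ n.+1 w by_head (ltnW wn)) => [|c wc].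
  apply: eq_bigr => x _; apply: eq_bigl => b /=.
  by rewrite big_cons /bump add1n addnS eqSS addnA.
by rewrite /by_head big_pred0 // => b; apply/negbTE/eqP; lia.
Qed.

Lemma mzsv_trunc_cons_ones (k n N : nat) :
  mzsv_trunc R N (k.+1 :: nseq n 1%N) =
  \sum_(1 <= t < n.+2)
    \sum_(a : t.-tuple 'I_n.+1 | (\sum_(x <- a) (x : nat))%N == (n.+1 - t)%N)
      mzv_trunc R N ((nth 0%N (map val a) t.-1 + k.+1)%N
                     :: map S (take t.-1 (map val a))).
Proof.
have -> : mzsv_trunc R N (k.+1 :: nseq n 1%N) = \sum_(1 <= m < N.+1) \sum_(c < n.+1)
    m%:R ^- (c + k.+1) * compositions_mzv n n.+1 m.-1 (n - c).
  apply: eq_big_nat => m /andP[m0 _]; apply: mzsv_trunc_ones_split_diag => // v vn.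
  exact: mzsv_trunc_ones_compositions.
rewrite sum_head_compositions big_add1 big_mkord; apply: eq_bigr => r _.
rewrite big_tuple_rcons; under [RHS]eq_bigr => b _ do rewrite big_mkcond.
rewrite [RHS]exchange_big; apply: eq_bigr => c _; rewrite -big_mkcond /=.
apply: eq_big => [b|b _].
  by rewrite big_rcons /=; move: (ltn_ord c) (ltn_ord r) => cn rn; apply/eqP/eqP; lia.
rewrite map_rcons nth_rcons size_map size_tuple ltnn eqxx -cats1 take_size_cat //.
by rewrite size_map size_tuple.
Qed.

End Truncations.

Theorem proposition2p3 (R : realType) (k n : nat) :
  (1 <= k)%N -> (1 <= n)%N ->
  mzsv R (k.+1 :: nseq n 1%N) =
  \sum_(1 <= t < n.+2)
    \sum_(a : t.-tuple 'I_n.+1 | (\sum_(x <- a) (x : nat))%N == (n.+1 - t)%N)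
      mzv R ((nth 0%N (map val a) t.-1 + k.+1)%N
             :: map S (take t.-1 (map val a))).
Proof.
move=> k1 _; apply: (limn_sum_nondecreasing (B := 2 ^+ n.+1)).
- exact: mzsv_trunc_cons_ones.
- exact: iota_uniq.
- move=> N; apply: le_trans (mzsv_trunc_two_ones_le R n N).
  by apply: le_mzsv_trunc_head.
- by move=> t a N M; apply: le_mzv_trunc.
- by move=> t a N; apply: mzv_trunc_ge0.
Qed.
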